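(* Let $p,q,r\in\{1,\dots,M\}$ and suppose $(\phi_q,\phi_r)$ forms a $p$-resonance. (i) If $p\in\mathcal I\cup\mathcal O$ (i.e. $\underline\omega_p\in\mathbb R$), then $q,r\in\mathcal I\cup\mathcal O$. (ii) If $p\in\mathcal P\cup\mathcal N$ (i.e. $\underline\omega_p\notin\mathbb R$), then at least one of $q,r$ belongs to $\mathcal P\cup\mathcal N$.
   Context: $\underline\omega_1,\dots,\underline\omega_M\in\mathbb C$ are the distinct eigenvalues of $-A_d(0)^{-1}(\underline\tau I+\sum_{j=1}^{d-1}\underline\eta_jA_j(0))$ for real matrices $A_j(0)$ and a boundary frequency $\beta=(\underline\tau,\underline\eta)\in\mathbb R^d\setminus0$; phases $\phi_m(x)=\beta\cdot x'+\underline\omega_mx_d$. $\mathcal I\cup\mathcal O$ is the set of $m$ with $\underline\omega_m$ real, $\mathcal P=\{m:\mathrm{Im}\,\underline\omega_m>0\}$, $\mathcal N=\{m:\mathrm{Im}\,\underline\omega_m<0\}$. Let $Z_m=\{n\in\mathbb Z:n\,\mathrm{Im}\,\underline\omega_m\ge0\}$. The pair $(\phi_q,\phi_r)$ forms a $p$-resonance if $n_p\phi_p=n_q\phi_q+n_r\phi_r$ for some $(n_p,n_q,n_r)\in\mathbb Z\times Z_q\times Z_r$ with all entries nonzero. *)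

From HB Require Import structures.
From mathcomp Require Import all_boot all_order all_algebra.
From mathcomp Require Import complex.
Set Implicit Arguments. Unset Strict Implicit. Unset Printing Implicit Defensive.
Import Order.TTheory GRing.Theory Num.Theory.
Local Open Scope ring_scope.
Local Open Scope complex_scope.

(* Setting (d = k+1 space dimensions x' = (t, y) in R x R^k, plus normal variable x_d):
   real N x N matrices A_1(0),...,A_k(0) (family [A]) and A_d(0) ([Ad]),
   boundary frequency beta = (tau, eta) in R^(1+k) \ 0. *)

Definition symbol_matrix (R : rcfType) (N k : nat)
  (A : 'I_k -> 'M[R]_N) (Ad : 'M[R]_N) (tau : R) (eta : 'rV[R]_k) : 'M[R[i]]_N :=
  map_mx (real_complex R)
    (- (invmx Ad *m (tau%:M + \sum_(j < k) eta 0 j *: A j))).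

Definition phase (R : rcfType) (k : nat) (tau : R) (eta : 'rV[R]_k)
  (om : R[i]) (t : R) (y : 'rV[R]_k) (xd : R) : R[i] :=
  (tau * t + \sum_(j < k) eta 0 j * y 0 j)%:C + om * xd%:C.

Definition Zset (R : rcfType) (om : R[i]) (n : int) : Prop := 0 <= n%:~R * complex.Im om.

Definition p_resonance (R : rcfType) (k M : nat) (tau : R) (eta : 'rV[R]_k)
  (omega : 'I_M -> R[i]) (p q r : 'I_M) : Prop :=
  exists (np nq nr : int),
    [/\ np != 0, nq != 0 & nr != 0] /\ Zset (omega q) nq /\ Zset (omega r) nr /\
      (forall (t : R) (y : 'rV[R]_k) (xd : R),
        phase tau eta (omega p) t y xd *~ np =
        phase tau eta (omega q) t y xd *~ nq + phase tau eta (omega r) t y xd *~ nr).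

From HB Require Import structures.
From mathcomp Require Import all_boot all_order all_algebra.
From mathcomp Require Import complex.
Set Implicit Arguments. Unset Strict Implicit. Unset Printing Implicit Defensive.
Import Order.TTheory GRing.Theory Num.Theory.
Local Open Scope ring_scope.
Local Open Scope complex_scope.

(* Evaluate the resonance identity at t = 0, y = 0, x_d = 1 and take imaginary
   parts: n_p Im w_p = n_q Im w_q + n_r Im w_r.  By the definition of Z_q and
   Z_r both summands on the right are nonnegative, so they vanish together when
   Im w_p = 0, and they cannot both vanish when Im w_p <> 0. *)

Lemma ImD (R : rcfType) (x y : R[i]) :
  complex.Im (x + y) = complex.Im x + complex.Im y.
Proof. by case: x; case: y. Qed.

Lemma ImMz (R : rcfType) (x : R[i]) (n : int) :
  complex.Im (x *~ n) = complex.Im x *~ n.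
Proof. exact: (raddfMz (@complex.Im R : Rcomplex R -> R)). Qed.

Lemma Im_phase_normal (R : rcfType) (k : nat) (tau : R) (eta : 'rV[R]_k)
    (om : R[i]) :
  complex.Im (phase tau eta om 0 0 1) = complex.Im om.
Proof. by case: om => a b; rewrite /phase /= !(mulr0, mul0r, addr0, add0r, mulr1). Qed.

Lemma Im_resonance (R : rcfType) (k M : nat) (tau : R) (eta : 'rV[R]_k)
    (omega : 'I_M -> R[i]) (p q r : 'I_M) (np nq nr : int) :
  (forall t y xd, phase tau eta (omega p) t y xd *~ np =
     phase tau eta (omega q) t y xd *~ nq + phase tau eta (omega r) t y xd *~ nr) ->
  complex.Im (omega p) *~ np = complex.Im (omega q) *~ nq + complex.Im (omega r) *~ nr.
Proof. by move=> /(_ 0 0 1)/(congr1 (@complex.Im R)); rewrite ImD !ImMz !Im_phase_normal. Qed.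

Lemma sign_constrained_sum (R : realDomainType) (np nq nr : int) (a b c : R) :
    np != 0 -> nq != 0 -> nr != 0 ->
    0 <= nq%:~R * b -> 0 <= nr%:~R * c ->
    a *~ np = b *~ nq + c *~ nr ->
  (a = 0 -> b = 0 /\ c = 0) /\ (a != 0 -> b != 0 \/ c != 0).
Proof.
move=> np0 nq0 nr0 ge0b ge0c.
rewrite -(mulrzl a) -(mulrzl b) -(mulrzl c) => E.
split=> [a0 | a0].
  move: E; rewrite a0 mulr0 => /esym/eqP; rewrite paddr_eq0 // !mulf_eq0.
  by rewrite !intr_eq0 (negbTE nq0) (negbTE nr0) => /andP[/eqP -> /eqP ->].
have [b0 | ] := eqVneq b 0; last by left.
right; apply: contraNneq a0 => c0.
by move/eqP: E; rewrite b0 c0 !mulr0 addr0 mulf_eq0 intr_eq0 (negbTE np0).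
Qed.

Theorem proposition2p13 (R : rcfType) (N k M : nat)
  (A : 'I_k -> 'M[R]_N) (Ad : 'M[R]_N) (tau : R) (eta : 'rV[R]_k)
  (omega : 'I_M -> R[i])
  (hAd : Ad \in unitmx)
  (hbeta : (tau != 0) || (eta != 0))
  (hinj : injective omega)
  (heig : forall z : R[i],
     eigenvalue (symbol_matrix A Ad tau eta) z <-> exists m, z = omega m)
  (p q r : 'I_M)
  (hres : p_resonance tau eta omega p q r) :
  (complex.Im (omega p) = 0 -> complex.Im (omega q) = 0 /\ complex.Im (omega r) = 0) /\
  (complex.Im (omega p) != 0 -> complex.Im (omega q) != 0 \/ complex.Im (omega r) != 0).
Proof.
case: hres => np [nq [nr [[np0 nq0 nr0] [Zq [Zr E]]]]].
exact: (sign_constrained_sum np0 nq0 nr0 Zq Zr (Im_resonance E)).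
Qed.
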